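(* Let $(\Omega,\mathcal{F},\mathbb{P})$ be a probability space, let $d\in\mathbb{N}$, $\eta\in(0,1)$, let $X_n\colon\Omega\to\mathbb{R}^d$, $n\in\mathbb{N}$, be i.i.d. random variables with $\mathbb{E}[\|X_1\|]<\infty$, let $A=\{\sum_{n=1}^\infty\eta(1-\eta)^{n-1}\|X_n\|<\infty\}$, and let $\chi\colon\Omega\to\mathbb{R}^d$ be a random variable satisfying $\chi(\omega)=\sum_{n=1}^\infty\eta(1-\eta)^{n-1}X_n(\omega)$ for all $\omega\in A$. Then (i) $A\in\mathcal{F}$ and $\mathbb{P}(A)=1$, and (ii) $\operatorname{supp}(X_1)\subseteq\operatorname{supp}(\chi)$.
   Context: For a Borel measure $\mu$ on $\mathbb{R}^d$, $\operatorname{supp}(\mu)=\{x\in\mathbb{R}^d\colon\mu(B)>0\text{ for every open }B\ni x\}$. For a random variable $X$, $\operatorname{supp}(X)=\operatorname{supp}(\mathbb{P}_X)$ where $\mathbb{P}_X$ is the law of $X$. $\|\cdot\|$ is the Euclidean norm. *)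

(* R^d is modelled as row vectors 'rV[R]_d with the
   library's (product = Euclidean) topology. *)
From HB Require Import structures.
From mathcomp Require Import all_boot all_order all_algebra.
From mathcomp Require Import all_classical all_reals all_analysis.
Set Implicit Arguments. Unset Strict Implicit. Unset Printing Implicit Defensive.
Import Order.TTheory GRing.Theory Num.Theory.
Import numFieldNormedType.Exports.
Local Open Scope classical_set_scope.
Local Open Scope ring_scope.

Definition eucl_norm (R : realType) (d : nat) (v : 'rV[R]_d) : R :=
  Num.sqrt (\sum_(i < d) v ord0 i ^+ 2).

Definition borel_Rd (R : realType) (d : nat) : set (set 'rV[R]_d) :=
  <<s [set B : set 'rV[R]_d | open B] >>.

Definition is_rv_Rd d0 (T : measurableType d0) (R : realType) (d : nat)
  (X : T -> 'rV[R]_d) : Prop :=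
  forall B, borel_Rd B -> measurable (X @^-1` B).

Definition law d0 (T : measurableType d0) (R : realType) (P : probability T R)
  (d : nat) (X : T -> 'rV[R]_d) : set 'rV[R]_d -> \bar R :=
  fun B => P (X @^-1` B).

Definition supp (R : realType) (d : nat) (mu : set 'rV[R]_d -> \bar R)
  : set 'rV[R]_d :=
  [set x | forall B : set 'rV[R]_d, open B -> B x -> (0 < mu B)%E].

Definition mutually_independent d0 (T : measurableType d0) (R : realType)
  (P : probability T R) (d : nat) (X : nat -> T -> 'rV[R]_d) : Prop :=
  forall (s : seq nat) (B : nat -> set 'rV[R]_d),
    uniq s -> (forall n, n \in s -> borel_Rd (B n)) ->
    P (\big[setI/setT]_(n <- s) (X n @^-1` B n)) =
    (\prod_(n <- s) P (X n @^-1` B n))%E.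

Definition identically_distributed d0 (T : measurableType d0) (R : realType)
  (P : probability T R) (d : nat) (X : nat -> T -> 'rV[R]_d) : Prop :=
  forall n B, borel_Rd B -> law P (X n) B = law P (X 0%N) B.

Definition iid d0 (T : measurableType d0) (R : realType)
  (P : probability T R) (d : nat) (X : nat -> T -> 'rV[R]_d) : Prop :=
  (forall n, is_rv_Rd (X n)) /\ mutually_independent P X /\
  identically_distributed P X.

From HB Require Import structures.
From mathcomp Require Import all_boot all_order all_algebra.
From mathcomp Require Import all_classical all_reals all_analysis.
From mathcomp Require Import measurable_realfun.
From mathcomp Require Import ring lra.
Import Order.TTheory GRing.Theory Num.Theory.
Import numFieldNormedType.Exports.
Local Open Scope classical_set_scope.
Local Open Scope ring_scope.

(* Fix s with 1 - eta < s < 1.  Markov's inequality gives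
   P(|X_n| >= s^-n) <= E|X_0| s^n, a summable bound, so the event G_N that
   |X_n| < s^-n for every n >= N has probability at least 1 - C s^N; on G_N the
   weighted series is dominated by a geometric series of ratio (1 - eta)/s,
   which gives (i).  For (ii), take x in the support of X_0 and a ball B(x, r).
   The event E that X_0, ..., X_(N-1) all lie in B(x, r/2) has positive
   probability and is independent of every X_n with n >= N, so
   P(E & G_N) >= P(E) (1 - C s^N) > 0 for large N.  On E & G_N the first N
   weights, whose total is 1 - (1 - eta)^N, keep the partial sums within
   r/2 + o(1) of x, hence chi lies in B(x, r). *)

Section eucl_norm.
Context {R : realType} {d : nat}.
Implicit Types (v : 'rV[R]_d) (B : set 'rV[R]_d).

Lemma eucl_norm_ge0 v : 0 <= eucl_norm v.
Proof. exact: sqrtr_ge0. Qed.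

Lemma mx_norm_le_eucl_norm v : `|v| <= eucl_norm v.
Proof.
rewrite [leLHS]/Num.Def.normr /= mx_normrE.
apply: bigmax_le => [|[i j] _]; first exact: eucl_norm_ge0.
have sq_ge0 k : 0 <= v ord0 k ^+ 2 by exact: sqr_ge0.
rewrite /= (ord1 i) -sqrtr_sqr /eucl_norm ler_sqrt; last exact: sumr_ge0.
by rewrite (bigD1 j) //= lerDl; exact: sumr_ge0.
Qed.

Lemma continuous_eucl_norm : continuous (@eucl_norm R d).
Proof.
move=> v; apply: continuous_comp; last exact: sqrt_continuous.
apply: (@continuous_big R _ +%R 0 xpredT add_continuous _ _
  (fun i (w : 'rV[R]_d) => w ord0 i ^+ 2)) => // i _ w.
by apply: continuousM; exact: coord_continuous.
Qed.

Lemma borel_Rd_open {B} : open B -> borel_Rd B.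
Proof. exact: sub_sigma_algebra. Qed.

Lemma borel_Rd_eucl_norm_lt (a : R) : borel_Rd [set v : 'rV[R]_d | eucl_norm v < a].
Proof.
apply: borel_Rd_open; exact: (continuousP _).1 continuous_eucl_norm _ (@open_lt _ a).
Qed.

Lemma borel_Rd_eucl_norm_ge (a : R) : borel_Rd [set v : 'rV[R]_d | a <= eucl_norm v].
Proof.
have -> : [set v : 'rV[R]_d | a <= eucl_norm v] = ~` [set v | eucl_norm v < a].
  by apply/seteqP; split => v /=; rewrite leNgt => /negP.
by rewrite -setTD; apply: sigma_algebraCD; exact: borel_Rd_eucl_norm_lt.
Qed.

End eucl_norm.

Lemma measurable_eucl_norm_rv d0 (T : measurableType d0) (R : realType) d
    (Y : T -> 'rV[R]_d) :
  is_rv_Rd Y -> measurable_fun setT (fun w => eucl_norm (Y w)).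
Proof.
move=> mY; apply: (measurability _ (RGenOpens.measurableE R)).
move=> _ [_ [a [b ->]] <-]; rewrite setTI.
apply: (mY (@eucl_norm R d @^-1` `]a, b[%classic)); apply: borel_Rd_open.
exact: (continuousP _).1 (@continuous_eucl_norm R d) _ (interval_open _ _).
Qed.

Section measure_bounds.
Local Open Scope ereal_scope.

Lemma nneseries_le_ub (R : realType) (u : nat -> \bar R) (C : \bar R) :
  (forall n, 0 <= u n) -> (forall k, \sum_(0 <= i < k) u i <= C) ->
  \sum_(0 <= i <oo) u i <= C.
Proof.
move=> u0 uC; apply: lime_le; first exact: is_cvg_nneseries.
by apply: nearW.
Qed.

Context {d0} {T : measurableType d0} {R : realType} (mu : {measure set T -> \bar R}).

Lemma markov_integral (f : T -> R) (a : R) :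
  measurable_fun setT f -> (forall w, 0 <= f w)%R -> (0 < a)%R ->
  a%:E * mu [set w | (a <= f w)%R] <= \int[mu]_w (f w)%:E.
Proof.
move=> mf f0 a0.
have := @le_integral_comp_abse _ T R mu setT measurableT (EFin \o f) a id
  (@measurable_id _ _ setT) (fun r h => h) (fun x y _ _ h => h)
  ((measurable_EFinP _ _).2 mf) a0.
have -> : setT `&` [set w | a%:E <= `|(EFin \o f) w|] = [set w | (a <= f w)%R].
  by apply/seteqP; split => w /=; rewrite ger0_norm ?lee_fin // => -[].
by under eq_integral do rewrite /= ger0_norm //; apply.
Qed.

Lemma measure_setI_bigcap_ge (E : set T) (F : nat -> set T) (u : nat -> R) (c : R) :
  measurable E -> (forall i, measurable (F i)) -> (forall i, 0 <= u i)%R ->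
  (forall i, mu (E `&` ~` F i) <= mu E * (u i)%:E) ->
  (forall k, \sum_(0 <= i < k) u i <= c)%R ->
  mu E <= mu (E `&` \bigcap_i F i) + mu E * c%:E.
Proof.
move=> mE mF u0 muF uc; have mFC i : measurable (E `&` ~` F i).
  exact/measurableI/measurableC.
rewrite {1}(measureDI mu mE (bigcapT_measurable mF)) addeC leeD2l //.
apply: (@le_trans _ _ (\sum_(0 <= i <oo) mu (E `&` ~` F i))).
  apply: measure_sigma_subadditive => //; first exact/measurableD/bigcapT_measurable.
  by rewrite setDE setC_bigcap setI_bigcupr.
apply: (@le_trans _ _ (\sum_(0 <= i <oo) mu E * (u i)%:E)).
  by apply: lee_nneseries => // i _ _; exact: measure_ge0.
apply: nneseries_le_ub => [n|k]; first by rewrite mule_ge0 ?lee_fin.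
rewrite -ge0_sume_distrr => [|i _]; last by rewrite lee_fin.
by rewrite sumEFin lee_wpmul2l // lee_fin.
Qed.

End measure_bounds.

Section geometric_weights.
Context {R : realType}.

Lemma sum_exprn_le_inv (y : R) k : 0 <= y < 1 ->
  \sum_(0 <= i < k) y ^+ i <= (1 - y)^-1.
Proof.
move=> /andP[y0 y1]; have y1' : 0 < 1 - y by rewrite subr_gt0.
rewrite -(ler_pM2r y1') mulVf ?gt_eqF // big_mkord mulrC -opprB mulNr -subrX1.
by rewrite opprB gerBl exprn_ge0.
Qed.

Lemma near_geometric_lt (K z eps : R) : `|z| < 1 -> 0 < eps ->
  \forall N \near \oo, K * z ^+ N < eps.
Proof. by move=> z1; exact: cvgr_lt (cvg_geometric K z1) eps. Qed.

Context {eta : R}.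
Hypothesis eta01 : 0 < eta < 1.

Lemma geometric_weight_ge0 n : 0 <= eta * (1 - eta) ^+ n.
Proof.
by have /andP[eta0 eta1] := eta01; rewrite mulr_ge0 ?exprn_ge0 ?subr_ge0 ?ltW.
Qed.

Lemma sum_geometric_weights N :
  \sum_(0 <= n < N) eta * (1 - eta) ^+ n = 1 - (1 - eta) ^+ N.
Proof.
have {1}-> : eta = - ((1 - eta) - 1) by ring.
by rewrite -mulr_sumr big_mkord mulNr -subrX1 opprB.
Qed.

Lemma dist_weighted_sum_le (V : normedModType R) (x : V) (y : nat -> V) (r K : R) N M :
  (N <= M)%N -> 0 <= r -> (forall n, (n < N)%N -> `|x - y n| <= r) ->
  \sum_(N <= n < M) eta * (1 - eta) ^+ n * `|y n| <= K ->
  `|x - \sum_(0 <= n < M) (eta * (1 - eta) ^+ n) *: y n| <= r + (K + `|x| * (1 - eta) ^+ N).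
Proof.
move=> NM r0 xy yK; have /andP[_ eta1] := eta01.
have x_split : x = \sum_(0 <= n < N) (eta * (1 - eta) ^+ n) *: x + (1 - eta) ^+ N *: x.
  by rewrite -scaler_suml sum_geometric_weights -scalerDl subrK scale1r.
rewrite (big_cat_nat (leq0n N) NM) /= {1}x_split opprD addrACA.
apply: le_trans (ler_normD _ _) _; apply: lerD.
  rewrite -sumrB; under eq_bigr do rewrite -scalerBr.
  apply: le_trans (ler_norm_sum _ _ _) _.
  apply: (@le_trans _ _ (\sum_(0 <= n < N) eta * (1 - eta) ^+ n * r)).
    rewrite big_nat_cond [leRHS]big_nat_cond; apply: ler_sum => n /andP[/andP[_ nN] _].
    rewrite normrZ ger0_norm; last exact: geometric_weight_ge0.
    by apply: ler_wpM2l (xy _ nN); exact: geometric_weight_ge0.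
  by rewrite -mulr_suml sum_geometric_weights ler_piMl // gerBl exprn_ge0 // subr_ge0 ltW.
apply: le_trans (ler_normB _ _) _; rewrite addrC normrZ mulrC ger0_norm; last first.
  by rewrite exprn_ge0 // subr_ge0 ltW.
rewrite lerD2r; apply: le_trans (ler_norm_sum _ _ _) _; apply: le_trans yK.
by apply: ler_sum => n _; rewrite normrZ ger0_norm // geometric_weight_ge0.
Qed.

Lemma exists_tail_ratio : exists s : R, [/\ 0 < s, s < 1 & 1 - eta < s].
Proof.
have /andP[eta0 eta1] := eta01.
have [lts lt1] : (1 - eta < (1 - eta + 1) / 2) * ((1 - eta + 1) / 2 < 1).
  by apply: midf_lt; rewrite gtrBl.
by exists ((1 - eta + 1) / 2); split => //; apply: lt_trans lts; rewrite subr_gt0.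
Qed.

Section weighted_tail.
Context {s : R}.
Hypotheses (s_gt0 : 0 < s) (s_gt : 1 - eta < s).

Lemma weighted_tail_le (e : nat -> R) N M :
  (forall n, (N <= n)%N -> 0 <= e n <= (s ^+ n)^-1) ->
  \sum_(N <= n < M) eta * (1 - eta) ^+ n * e n <=
    eta / (1 - (1 - eta) / s) * ((1 - eta) / s) ^+ N.
Proof.
move=> he; have /andP[eta0 eta1] := eta01.
have t0 : 0 <= (1 - eta) / s by rewrite divr_ge0 ?subr_ge0 ?ltW.
have t1 : (1 - eta) / s < 1 by rewrite ltr_pdivrMr // mul1r.
apply: (@le_trans _ _ (\sum_(N <= n < M) eta * ((1 - eta) / s) ^+ n)).
  rewrite big_nat_cond [leRHS]big_nat_cond; apply: ler_sum => n /andP[/andP[Nn _] _].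
  have /andP[en0 en1] := he n Nn.
  rewrite exprMn exprVn -mulrA ler_pM2l //.
  by apply: ler_wpM2l en1; rewrite exprn_ge0 // subr_ge0 ltW.
rewrite -mulr_sumr mulrAC -mulrA ler_pM2l // -{1}(add0n N) big_addn.
under eq_bigr do rewrite exprD.
rewrite -mulr_suml mulrC; apply: ler_wpM2l; first exact: exprn_ge0.
by rewrite sum_exprn_le_inv // t0 t1.
Qed.

Lemma weighted_series_lty (e : nat -> R) N :
  (forall n, 0 <= e n) -> (forall n, (N <= n)%N -> e n <= (s ^+ n)^-1) ->
  (\sum_(0 <= n <oo) (eta * (1 - eta) ^+ n * e n)%:E < +oo)%E.
Proof.
move=> e0 eN.
have c0 n : 0 <= eta * (1 - eta) ^+ n * e n by rewrite mulr_ge0 ?geometric_weight_ge0.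
apply: (@le_lt_trans _ _ (\sum_(0 <= n < N) eta * (1 - eta) ^+ n * e n +
  eta / (1 - (1 - eta) / s) * ((1 - eta) / s) ^+ N)%:E); last exact: ltry.
apply: nneseries_le_ub => [n|k]; first by rewrite lee_fin.
rewrite sumEFin lee_fin.
apply: (@le_trans _ _ (\sum_(0 <= n < maxn k N) eta * (1 - eta) ^+ n * e n)).
  by rewrite (big_cat_nat (leq0n k) (leq_maxl k N)) /= lerDl sumr_ge0.
rewrite (big_cat_nat (leq0n N) (leq_maxr k N)) /= lerD2l.
by apply: weighted_tail_le => n Nn; rewrite e0 eN.
Qed.

End weighted_tail.
End geometric_weights.

Section iid_sequence.
Context {d0} {T : measurableType d0} {R : realType} (P : probability T R) {d : nat}.
Variable X : nat -> T -> 'rV[R]_d.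
Hypothesis iidX : iid P X.
Local Open Scope ereal_scope.

Definition first_in N (B : set 'rV[R]_d) : set T :=
  \big[setI/setT]_(k <- iota 0 N) X k @^-1` B.

Lemma first_inP N B w : first_in N B w <-> forall n, (n < N)%N -> B (X n w).
Proof.
rewrite /first_in -bigcap_seq.
by split => [h n nN|h n]; [apply: h; rewrite /= mem_iota | rewrite /= mem_iota => /h].
Qed.

Lemma measurable_first_in N {B} : borel_Rd B -> measurable (first_in N B).
Proof. by move=> mB; apply: bigsetI_measurable => k _; exact: iidX.1. Qed.

Lemma first_in_prob N B :
  borel_Rd B -> P (first_in N B) = \prod_(k <- iota 0 N) P (X k @^-1` B).
Proof. by move=> mB; apply: iidX.2.1 => //; exact: iota_uniq. Qed.

Lemma first_in_prob_gt0 N {x B} :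
  supp (law P (X 0%N)) x -> open B -> B x -> 0 < P (first_in N B).
Proof.
move=> xsupp oB Bx; have mB := borel_Rd_open oB; rewrite first_in_prob //.
apply: (big_ind (fun p => 0 < p)) => // [p q|k _]; first exact: mule_gt0.
by have := iidX.2.2 k B mB; rewrite /law => ->; exact: xsupp.
Qed.

Lemma first_in_indep {N B n C} : borel_Rd B -> borel_Rd C -> (N <= n)%N ->
  P (first_in N B `&` X n @^-1` C) = P (first_in N B) * P (X n @^-1` C).
Proof.
move=> mB mC Nn.
(* apply the product rule to X_0, ..., X_(N-1), X_n with C in the last slot *)
set B' := fun k => if k == n then C else B.
have B'E : {in iota 0 N, B' =1 fun=> B}.
  move=> k; rewrite mem_iota => /andP[_ kN].
  by rewrite /B' ifN // neq_ltn (leq_trans kN Nn).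
have mB' k : k \in rcons (iota 0 N) n -> borel_Rd (B' k) by rewrite /B'; case: eqP.
have firstE : \big[setI/setT]_(k <- iota 0 N) X k @^-1` B' k = first_in N B.
  by apply: eq_big_seq => k /B'E ->.
have probE : \prod_(k <- iota 0 N) P (X k @^-1` B' k) = P (first_in N B).
  by rewrite first_in_prob //; apply: eq_big_seq => k /B'E ->.
have := iidX.2.1 (rcons (iota 0 N) n) B'.
rewrite rcons_uniq mem_iota iota_uniq add0n -leqNgt Nn => /(_ isT mB').
by rewrite !big_rcons /= firstE probE /B' eqxx.
Qed.

Variable e0 : R.
Hypothesis intX0 : \int[P]_w (eucl_norm (X 0%N w))%:E = e0%:E.

Lemma prob_eucl_norm_ge n (a : R) : (0 < a)%R ->
  P (X n @^-1` [set v | (a <= eucl_norm v)%R]) <= (e0 / a)%:E.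
Proof.
move=> a0; have := iidX.2.2 n _ (borel_Rd_eucl_norm_ge a); rewrite /law => ->.
rewrite EFinM lee_pdivlMr // muleC -intX0.
apply: (markov_integral P (fun w => eucl_norm (X 0%N w))) => //.
  exact: measurable_eucl_norm_rv (iidX.1 0%N).
by move=> w; exact: eucl_norm_ge0.
Qed.

(* Indexed by i = n - N, so that it is an intersection over all of nat. *)
Definition tail_bounded (s : R) N : set T :=
  \bigcap_i X (i + N) @^-1` [set v | (eucl_norm v < (s ^+ (i + N))^-1)%R].

Lemma tail_boundedP s N w : tail_bounded s N w ->
  forall n, (N <= n)%N -> (eucl_norm (X n w) < (s ^+ n)^-1)%R.
Proof. by move=> h n Nn; rewrite -(subnK Nn); exact: h. Qed.

Lemma measurable_tail_bounded s N : measurable (tail_bounded s N).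
Proof.
by apply: bigcapT_measurable => i; apply: iidX.1; exact: borel_Rd_eucl_norm_lt.
Qed.

Lemma tail_bounded_ge (s : R) N E : (0 < s < 1)%R -> measurable E ->
  (forall n C, (N <= n)%N -> borel_Rd C -> P (E `&` X n @^-1` C) = P E * P (X n @^-1` C)) ->
  P E <= P (E `&` tail_bounded s N) + P E * (e0 / (1 - s) * s ^+ N)%:E.
Proof.
move=> /andP[s0 s1] mE indepE.
have e00 : (0 <= e0)%R.
  rewrite -lee_fin -intX0; apply: integral_ge0 => w _; exact: eucl_norm_ge0.
have large_prob i : P (E `&` ~` (X (i + N)%N @^-1`
    [set v | (eucl_norm v < (s ^+ (i + N))^-1)%R])) <= P E * (e0 * s ^+ (i + N))%:E.
  rewrite preimage_setC.
  have -> : ~` [set v : 'rV[R]_d | (eucl_norm v < (s ^+ (i + N))^-1)%R] =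
      [set v | ((s ^+ (i + N))^-1 <= eucl_norm v)%R].
    by apply/seteqP; split => v /=; rewrite leNgt => /negP.
  rewrite indepE ?leq_addl //; last exact: borel_Rd_eucl_norm_ge.
  apply: lee_wpmul2l => //; rewrite -[X in (e0 * X)%R](invrK (s ^+ (i + N))%R).
  by apply: prob_eucl_norm_ge; rewrite invr_gt0 exprn_gt0.
rewrite /tail_bounded.
apply: (measure_setI_bigcap_ge P _ _ (fun i => e0 * s ^+ (i + N))%R _ mE).
- by move=> i; apply: iidX.1; exact: borel_Rd_eucl_norm_lt.
- by move=> i; apply: mulr_ge0 => //; exact/exprn_ge0/ltW.
- exact: large_prob.
- move=> k; under eq_bigr do rewrite exprD mulrA mulrAC.
  rewrite -mulr_sumr [leRHS]mulrAC; apply: ler_wpM2l.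
    by apply: mulr_ge0 => //; exact/exprn_ge0/ltW.
  by rewrite sum_exprn_le_inv // (ltW s0) s1.
Qed.

Lemma first_in_tail_bounded_gt0 N {x B} {s : R} :
  supp (law P (X 0%N)) x -> open B -> B x -> (0 < s < 1)%R ->
  (e0 / (1 - s) * s ^+ N < 1)%R -> 0 < P (first_in N B `&` tail_bounded s N).
Proof.
move=> xsupp oB Bx s01 small; have mB := borel_Rd_open oB.
have mE := measurable_first_in N mB.
have Epos := first_in_prob_gt0 N xsupp oB Bx.
have := tail_bounded_ge s N _ s01 mE (fun n C Nn mC => first_in_indep mB mC Nn).
rewrite lt0e measure_ge0 andbT => le_E; apply/eqP => EG0; move: le_E.
rewrite EG0 add0e; apply/negP; rewrite -ltNge.
have Efin : P (first_in N B) \is a fin_num := fin_num_measure P _ mE.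
move: Epos; rewrite -(fineK Efin) -EFinM !lte_fin => Epos.
by rewrite gtr_pMr.
Qed.

Section weighted_series.
Local Open Scope ring_scope.
Variable eta : R.
Hypothesis eta01 : 0 < eta < 1.

Definition weighted_norm_summable : set T :=
  [set w | (\sum_(0 <= n <oo) (eta * (1 - eta) ^+ n * eucl_norm (X n w))%:E < +oo)%E].

Lemma measurable_weighted_norm_summable : measurable weighted_norm_summable.
Proof.
rewrite -(setTI weighted_norm_summable); apply: emeasurable_fun_infty_o => //.
apply: ge0_emeasurable_sum => [k w _ _|k _].
  by rewrite lee_fin mulr_ge0 ?geometric_weight_ge0 ?eucl_norm_ge0.
apply/measurable_EFinP/measurable_funM => //.
exact: measurable_eucl_norm_rv (iidX.1 k).
Qed.

Lemma tail_bounded_sub {s N} : 0 < s -> 1 - eta < s ->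
  tail_bounded s N `<=` weighted_norm_summable.
Proof.
move=> s0 s_gt w /tail_boundedP wN; apply: (weighted_series_lty eta01 s0 s_gt) => n.
  exact: eucl_norm_ge0.
by move=> /wN /ltW.
Qed.

Lemma weighted_norm_summable_prob1 : P weighted_norm_summable = 1%E.
Proof.
have [s [s0 s1 s_gt]] := exists_tail_ratio eta01.
have s01 : 0 < s < 1 by rewrite s0 s1.
have indepT n C : P (setT `&` X n @^-1` C) = (P setT * P (X n @^-1` C))%E.
  by rewrite setTI probability_setT mul1e.
have mA := measurable_weighted_norm_summable.
apply/eqP; rewrite eq_le probability_le1 //=.
apply/lee_addgt0Pr => eps eps0; near \oo => N.
have := tail_bounded_ge _ N _ s01 measurableT (fun n C _ _ => indepT n C).
rewrite setTI probability_setT !mul1e => /le_trans; apply; apply: leeD.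
  apply: le_measure; last exact: tail_bounded_sub.
    by rewrite inE; exact: measurable_tail_bounded.
  by rewrite inE.
rewrite lee_fin; apply/ltW; near: N; apply: near_geometric_lt => //.
by rewrite ger0_norm ?(ltW s0).
Unshelve. all: by end_near.
Qed.

Lemma first_in_tail_bounded_limit {x : 'rV[R]_d} {r s : R} {N w} {y : 'rV[R]_d} :
  0 < s -> 1 - eta < s -> 0 <= r ->
  first_in N (ball x r) w -> tail_bounded s N w ->
  (fun M => \sum_(0 <= n < M) (eta * (1 - eta) ^+ n) *: X n w) @ \oo --> y ->
  `|x - y| <= r + (eta / (1 - (1 - eta) / s) * ((1 - eta) / s) ^+ N +
                  `|x| * (1 - eta) ^+ N).
Proof.
move=> s0 s_gt r0 /first_inP wE /tail_boundedP wG cvy.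
set c := (r + _)%R; suff : closed_ball_ Num.norm x c y by [].
apply: (closed_cvg _ (@closed_closed_ball_ _ _ x c) _ _ cvy); near=> M.
apply: dist_weighted_sum_le => //.
- by near: M; exact: nbhs_infty_ge.
- by move=> n /wE; rewrite -ball_normE /ball_ /= => /ltW.
apply: weighted_tail_le => // n /wG /ltW le_n; rewrite normr_ge0 /=.
exact: le_trans (mx_norm_le_eucl_norm _) le_n.
Unshelve. all: by end_near.
Qed.

Lemma supp_law_weighted_limit (chi : T -> 'rV[R]_d) : is_rv_Rd chi ->
  (forall w, weighted_norm_summable w ->
     (fun M => \sum_(0 <= n < M) (eta * (1 - eta) ^+ n) *: X n w) @ \oo --> chi w) ->
  supp (law P (X 0%N)) `<=` supp (law P chi).
Proof.
move=> mchi cvchi x xsupp B oB Bx.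
have [r r0 rB] : exists2 r, 0 < r & ball x r `<=` B by apply/nbhs_ballP; exact: oB.
have [r2 r8] : 0 < r / 2 /\ 0 < r / 8 by rewrite !divr_gt0.
have [s [s0 s1 s_gt]] := exists_tail_ratio eta01.
have s01 : 0 < s < 1 by rewrite s0 s1.
have /andP[eta0 eta1] := eta01.
have q0 : 0 <= 1 - eta by rewrite subr_ge0 ltW.
near \oo => N.
have tail_prob_small : e0 / (1 - s) * s ^+ N < 1.
  by near: N; apply: near_geometric_lt; rewrite ?ger0_norm ?(ltW s0).
have tail_small : eta / (1 - (1 - eta) / s) * ((1 - eta) / s) ^+ N < r / 8.
  near: N; apply: near_geometric_lt => //.
  rewrite ger0_norm; last exact: divr_ge0 q0 (ltW s0).
  by rewrite ltr_pdivrMr // mul1r.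
have head_small : `|x| * (1 - eta) ^+ N < r / 8.
  near: N; apply: near_geometric_lt => //.
  by rewrite ger0_norm // gtrBl.
rewrite /law; apply: (lt_le_trans (first_in_tail_bounded_gt0 N xsupp
  (ball_open x (r / 2)) (ballxx x r2) s01 tail_prob_small)).
apply: le_measure; last move=> w [Ew Gw].
- rewrite inE; apply: measurableI; last exact: measurable_tail_bounded.
  exact: measurable_first_in (borel_Rd_open (ball_open x (r / 2))).
- by rewrite inE; exact: mchi (borel_Rd_open oB).
apply/rB; rewrite -ball_normE /ball_ /=.
have := first_in_tail_bounded_limit s0 s_gt (ltW r2) Ew Gw
  (cvchi w (tail_bounded_sub s0 s_gt _ Gw)).
move/le_lt_trans; apply; lra.
Unshelve. all: by end_near.
Qed.

End weighted_series.

End iid_sequence.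

Theorem lemma6p13 (d0 : measure_display) (T : measurableType d0)
  (R : realType) (P : probability T R) (d : nat) (eta : R)
  (X : nat -> T -> 'rV[R]_d) (chi : T -> 'rV[R]_d) :
  0 < eta < 1 ->
  iid P X ->
  (\int[P]_w (eucl_norm (X 0%N w))%:E < +oo)%E ->
  is_rv_Rd chi ->
  (forall w,
     (\sum_(0 <= n <oo) (eta * (1 - eta) ^+ n * eucl_norm (X n w))%:E < +oo)%E ->
     (fun N => \sum_(0 <= n < N) (eta * (1 - eta) ^+ n) *: X n w) @ \oo
       --> chi w) ->
  let A := [set w | (\sum_(0 <= n <oo)
                       (eta * (1 - eta) ^+ n * eucl_norm (X n w))%:E < +oo)%E] in
  (measurable A /\ P A = 1%E) /\
  supp (law P (X 0%N)) `<=` supp (law P chi).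
Proof.
move=> eta01 iidX intX mchi cvchi A.
have [e0 intX0] : exists e0 : R, (\int[P]_w (eucl_norm (X 0%N w))%:E = e0%:E)%E.
  exists (fine (\int[P]_w (eucl_norm (X 0%N w))%:E)%E).
  rewrite fineK // ge0_fin_numE //.
  by apply: integral_ge0 => w _; rewrite lee_fin eucl_norm_ge0.
split; first split.
- exact: (measurable_weighted_norm_summable _ _ iidX _ eta01).
- exact: (weighted_norm_summable_prob1 _ _ iidX _ intX0 _ eta01).
- exact: (supp_law_weighted_limit _ _ iidX _ intX0 _ eta01 _ mchi cvchi).
Qed.
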